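(* Let $\Gamma$ act by automorphisms on a finite dimensional CAT(0) cube complex $X$. If the action is Roller elementary (some $\Gamma$-orbit in $\overline X$ is finite), then there are $v,w\in\overline X$ with $\Gamma\cdot\mathcal I(v,w)=\mathcal I(v,w)$. If moreover some $\Gamma$-orbit in $\overline X$ has odd cardinality, then $\Gamma$ has a fixed point in $\overline X$.
   Context: $X$ is a finite-dimensional, second countable CAT(0) cube complex identified with its vertex set; $\mathfrak H$ its half-spaces; $U_v=\{h:v\in h\}$; the Roller compactification $\overline X$ is the closure of $\{U_v\}$ in $2^{\mathfrak H}$, each $\xi\in\overline X$ being a subset $U_\xi\subset\mathfrak H$. For $v,w\in\overline X$, $\mathcal I(v,w)=\{m\in\overline X:U_v\cap U_w\subset U_m\}$. *)

(* A finite-dimensional, second countable CAT(0) cube complex is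
   encoded through its vertex set and its half-spaces (Sageev/Roller duality):
   the vertex set is exactly the set of consistent orientations of the half-space
   pocset that differ finitely from a given vertex. *)
From Stdlib Require Import List Arith.
Import ListNotations.

Record CubeComplex := {
  vert : Type;
  hs : Type;
  hstar : hs -> hs;
  inU : vert -> hs -> Prop;        (* inU v h  <->  h ∈ U_v  <->  v ∈ h *)
  hstar_invol : forall h, hstar (hstar h) = h;
  inU_star : forall v h, inU v (hstar h) <-> ~ inU v h;
  hs_nonempty : forall h, exists v, inU v h;
  hs_ext : forall h k, (forall v, inU v h <-> inU v k) -> h = k;
  vert_ext : forall v w, (forall h, inU v h <-> inU w h) -> v = w;
  sep_finite : forall v w, exists l : list hs,
      forall h, inU v h -> ~ inU w h -> In h l;
  vert_complete : forall (S : hs -> Prop) (v : vert),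
      (forall h, S (hstar h) <-> ~ S h) ->
      (forall h k, (forall u, inU u h -> inU u k) -> S h -> S k) ->
      (exists l : list hs, forall h, S h -> ~ inU v h -> In h l) ->
      exists w, forall h, inU w h <-> S h;
  vert_inhabited : inhabited vert;
  (* second countable: countably many half-spaces (equivalently, cubes) *)
  hs_countable : exists e : nat -> option hs, forall h, exists n, e n = Some h;
  (* finite dimensional: pairwise transverse families of half-spaces are bounded *)
  fin_dim : exists d : nat, forall l : list hs, NoDup l ->
      (forall h k, In h l -> In k l -> h <> k ->
         (exists v, inU v h /\ inU v k) /\
         (exists v, inU v h /\ inU v (hstar k)) /\
         (exists v, inU v (hstar h) /\ inU v k) /\
         (exists v, inU v (hstar h) /\ inU v (hstar k))) ->
      length l <= d
}.

Record GroupAction (X : CubeComplex) := {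
  grp : Type;
  gmul : grp -> grp -> grp;
  gone : grp;
  ginv : grp -> grp;
  gmul_assoc : forall a b c, gmul a (gmul b c) = gmul (gmul a b) c;
  gmul_one_l : forall a, gmul gone a = a;
  gmul_inv_l : forall a, gmul (ginv a) a = gone;
  actV : grp -> vert X -> vert X;
  actH : grp -> hs X -> hs X;
  act_star : forall g h, actH g (hstar X h) = hstar X (actH g h);
  act_inU : forall g v h, inU X (actV g v) (actH g h) <-> inU X v h;
  actV_one : forall v, actV gone v = v;
  actV_mul : forall a b v, actV (gmul a b) v = actV a (actV b v);
  actH_one : forall h, actH gone h = h;
  actH_mul : forall a b h, actH (gmul a b) h = actH a (actH b h)
}.
Arguments grp {X}.
Arguments ginv {X}.
Arguments actH {X}.

(* Points of 2^𝔥 are subsets U ⊂ 𝔥, i.e. predicates on half-spaces. *)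
Definition hsset (X : CubeComplex) := hs X -> Prop.

(* Roller compactification: closure of {U_v} in the product topology on 2^𝔥. *)
Definition roller (X : CubeComplex) (xi : hsset X) : Prop :=
  forall F : list (hs X), exists v : vert X,
    forall h, In h F -> (xi h <-> inU X v h).

(* induced action on 2^𝔥:  U_{g ξ} = g U_ξ = { g h : h ∈ U_ξ } *)
Definition gact {X : CubeComplex} (A : GroupAction X) (g : grp A)
  (xi : hsset X) : hsset X :=
  fun h => xi (actH A (ginv A g) h).

Definition interval (X : CubeComplex) (v w m : hsset X) : Prop :=
  roller X m /\ forall h, v h -> w h -> m h.

(* For a finite list L of points of the Roller compactification, consider the
   majority vote: the half-spaces h lying in more than half of the U_p (p in L),
   ties being broken by a fixed member p0 of L or by its antipode.  On any finite
   set of half-spaces the points of L are approximated by vertices, and the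
   majority vote of finitely many vertices is a consistent orientation differing
   finitely from a vertex, hence a vertex; so the majority vote is again in the
   Roller compactification.  For a finite Γ-orbit the vote counts are
   Γ-invariant.  The two tie-breaks give v, w with U_v ∩ U_w equal to the set of
   strict-majority half-spaces, so I(v,w) is Γ-invariant; for an orbit of odd
   size there are no ties and the majority vote itself is a fixed point. *)
From Stdlib Require Import List Arith Lia Permutation FinFun.
From Stdlib Require Import Classical ClassicalEpsilon FunctionalExtensionality PropExtensionality.
Import ListNotations.

Definition indicator (P : Prop) : nat :=
  if excluded_middle_informative P then 1 else 0.

Lemma indicator_true (P : Prop) : P -> indicator P = 1.
Proof. unfold indicator; destruct (excluded_middle_informative P); tauto. Qed.

Lemma indicator_false (P : Prop) : ~ P -> indicator P = 0.
Proof. unfold indicator; destruct (excluded_middle_informative P); tauto. Qed.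

Lemma indicator_iff (P Q : Prop) : (P <-> Q) -> indicator P = indicator Q.
Proof.
  intros HPQ; destruct (classic P).
  - rewrite !indicator_true; tauto.
  - rewrite !indicator_false; tauto.
Qed.

Section Majority.

Variable X : CubeComplex.
Implicit Types (L : list (hsset X)) (p : hsset X) (h k : hs X).

Fixpoint votes L h : nat :=
  match L with nil => 0 | p :: L' => indicator (p h) + votes L' h end.

Definition hs_sub h k : Prop := forall u, inU X u h -> inU X u k.

Definition consistent p : Prop :=
  (forall h, p (hstar X h) <-> ~ p h) /\ (forall h k, hs_sub h k -> p h -> p k).

Lemma roller_consistent p : roller X p -> consistent p.
Proof.
  intros Rp; split.
  - intros h. destruct (Rp [h; hstar X h]) as [v Hv].
    rewrite (Hv (hstar X h)), (Hv h) by (simpl; auto). apply inU_star.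
  - intros h k Hhk Ph. destruct (Rp [h; k]) as [v Hv].
    apply (Hv k); [simpl; auto|]. apply Hhk, (Hv h); simpl; auto.
Qed.

Lemma inU_consistent u : consistent (inU X u).
Proof. split; [intros; apply inU_star | intros h k Hhk; apply Hhk]. Qed.

Lemma votes_hstar L h : (forall p, In p L -> consistent p) ->
  votes L (hstar X h) + votes L h = length L.
Proof.
  induction L as [|p L IH]; intros HL; simpl; auto.
  destruct (HL p (or_introl eq_refl)) as [Hstar _].
  specialize (IH (fun q Hq => HL q (or_intror Hq))).
  destruct (classic (p h)) as [Ph|Ph].
  - rewrite (indicator_true _ Ph), indicator_false by (rewrite Hstar; tauto). lia.
  - rewrite (indicator_false _ Ph), indicator_true by (apply Hstar; auto). lia.
Qed.

Lemma votes_mono L h k : (forall p, In p L -> p h -> p k) -> votes L h <= votes L k.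
Proof.
  induction L as [|p L IH]; intros HL; simpl; auto.
  specialize (IH (fun q Hq => HL q (or_intror Hq))).
  destruct (classic (p h)) as [Ph|Ph].
  - rewrite (indicator_true _ Ph), (indicator_true (p k)) by (apply HL; simpl; auto). lia.
  - rewrite (indicator_false _ Ph). lia.
Qed.

Lemma votes_eq_agree L h k : (forall p, In p L -> p h -> p k) ->
  votes L h = votes L k -> forall p, In p L -> p k -> p h.
Proof.
  induction L as [|q L IH]; intros HL Heq p Hp Pk; [destruct Hp|].
  assert (HL' : forall p, In p L -> p h -> p k) by (intros r Hr; apply HL; simpl; auto).
  pose proof (votes_mono L h k HL') as Hle. simpl in Heq.
  destruct (classic (q h)) as [Qh|Qh].
  - rewrite (indicator_true _ Qh), (indicator_true (q k)) in Heq by (apply HL; simpl; auto).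
    destruct Hp as [<-|Hp]; [exact Qh|]. apply (IH HL'); auto; lia.
  - destruct (classic (q k)) as [Qk|Qk].
    + rewrite (indicator_false _ Qh), (indicator_true _ Qk) in Heq. lia.
    + rewrite (indicator_false _ Qh), (indicator_false _ Qk) in Heq.
      destruct Hp as [<-|Hp]; [contradiction|]. apply (IH HL'); auto.
Qed.

Lemma votes_pos L h : 0 < votes L h -> exists p, In p L /\ p h.
Proof.
  induction L as [|p L IH]; simpl; intros Hpos; [lia|].
  destruct (classic (p h)) as [Ph|Ph]; [exists p; auto|].
  rewrite (indicator_false _ Ph) in Hpos. destruct (IH Hpos) as [q [? ?]]; eauto.
Qed.

Lemma votes_perm L L' h : Permutation L L' -> votes L h = votes L' h.
Proof. induction 1; simpl; lia. Qed.

Definition tie_side (b : bool) p0 h : Prop := if b then p0 (hstar X h) else p0 h.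

Definition majority L p0 (b : bool) h : Prop :=
  length L < 2 * votes L h \/ (2 * votes L h = length L /\ tie_side b p0 h).

Lemma tie_side_hstar b p0 h : consistent p0 -> (tie_side b p0 (hstar X h) <-> ~ tie_side b p0 h).
Proof.
  intros [Hstar _]; destruct b; simpl; [|apply Hstar].
  rewrite hstar_invol, (Hstar h). split; [tauto | apply NNPP].
Qed.

Lemma majority_hstar L p0 b h : (forall p, In p L -> consistent p) -> consistent p0 ->
  (majority L p0 b (hstar X h) <-> ~ majority L p0 b h).
Proof.
  intros HL Hp0. unfold majority. rewrite tie_side_hstar by exact Hp0.
  pose proof (votes_hstar L h HL).
  destruct (lt_eq_lt_dec (2 * votes L h) (length L)) as [[Hlt|Heq]|Hgt].
  - split; [intros _ [?|[? _]]; lia | intros _; left; lia].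
  - split; [intros [?|[? ?]] [?|[? ?]]; lia || tauto |].
    intros Hn; right; split; [lia | intros T; apply Hn; right; auto].
  - split; [intros [?|[? ?]]; lia | intros Hn; exfalso; apply Hn; left; lia].
Qed.

(* Two half-spaces h ⊆ k with the same number of votes are not told apart by
   any member of L, in particular not by p0, so ties are broken coherently. *)
Lemma majority_mono L p0 b h k : (forall p, In p L -> consistent p) ->
  In p0 L -> hs_sub h k -> majority L p0 b h -> majority L p0 b k.
Proof.
  intros HL Hp0 Hhk. unfold majority.
  assert (Hhk' : forall p, In p L -> p h -> p k)
    by (intros p Hp; apply (proj2 (HL p Hp)); exact Hhk).
  pose proof (votes_mono L h k Hhk') as Hle.
  intros [Hlt|[Heq Htie]]; [left; lia|].
  destruct (lt_eq_lt_dec (2 * votes L k) (length L)) as [[?|Heq']|?]; [lia| |left; lia].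
  right; split; [exact Heq'|].
  pose proof (votes_eq_agree L h k Hhk' ltac:(lia) p0 Hp0) as Hkh.
  destruct (HL p0 Hp0) as [Hstar Hmono]; destruct b; simpl in *.
  - rewrite Hstar in *. auto.
  - exact (Hmono h k Hhk Htie).
Qed.

Lemma separating_halfspaces_finite (us : list (vert X)) u0 : exists l : list (hs X),
  forall u, In u us -> forall h, inU X u h -> ~ inU X u0 h -> In h l.
Proof.
  induction us as [|u us [l Hl]]; [exists []; intros u []|].
  destruct (sep_finite X u u0) as [lu Hlu].
  exists (lu ++ l). intros u' [<-|Hu'] h H1 H2; apply in_or_app; eauto.
Qed.

Lemma majority_vertices_vertex (us : list (vert X)) u0 b : In u0 us ->
  exists w, forall h, inU X w h <-> majority (map (inU X) us) (inU X u0) b h.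
Proof.
  intros Hu0.
  assert (HL : forall p, In p (map (inU X) us) -> consistent p)
    by (intros p Hp; apply in_map_iff in Hp as [u [<- _]]; apply inU_consistent).
  assert (Hp0 : In (inU X u0) (map (inU X) us)) by (apply in_map; exact Hu0).
  destruct (separating_halfspaces_finite us u0) as [l Hl].
  apply (vert_complete X _ u0).
  - intros h; apply majority_hstar; [exact HL | apply inU_consistent].
  - intros h k; apply majority_mono; assumption.
  - exists l. intros h Hmaj Hn.
    assert (Hpos : 0 < votes (map (inU X) us) h)
      by (destruct Hmaj as [?|[? _]]; destruct us; simpl in *; lia || contradiction).
    apply votes_pos in Hpos as [p [Hp Ph]]. apply in_map_iff in Hp as [u [<- Hu]].
    exact (Hl u Hu h Ph Hn).
Qed.

Lemma roller_list_approx (F : list (hs X)) L : (forall p, In p L -> roller X p) ->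
  exists us : list (vert X), length us = length L /\
    (forall h, In h F -> votes L h = votes (map (inU X) us) h) /\
    (forall p, In p L -> exists u, In u us /\ forall h, In h F -> (p h <-> inU X u h)).
Proof.
  induction L as [|p L IH]; intros HL.
  - exists []; repeat split; auto. intros p [].
  - destruct (HL p (or_introl eq_refl) F) as [v Hv].
    destruct (IH (fun q Hq => HL q (or_intror Hq))) as [us [Hlen [Hvotes Happ]]].
    exists (v :: us). split; [simpl; auto|]. split.
    + intros h Hh; simpl. rewrite (indicator_iff _ _ (Hv h Hh)), Hvotes; auto.
    + intros q [<-|Hq]; [exists v; simpl; auto|].
      destruct (Happ q Hq) as [u [? ?]]; exists u; simpl; auto.
Qed.

Lemma majority_roller L p0 b : (forall p, In p L -> roller X p) -> In p0 L ->
  roller X (majority L p0 b).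
Proof.
  intros HL Hp0 F.
  destruct (roller_list_approx (F ++ map (hstar X) F) L HL) as [us [Hlen [Hvotes Happ]]].
  destruct (Happ p0 Hp0) as [u0 [Hu0 Hu0F]].
  destruct (majority_vertices_vertex us u0 b Hu0) as [w Hw].
  exists w. intros h Hh. rewrite Hw. unfold majority. rewrite length_map, Hlen.
  rewrite <- (Hvotes h) by (apply in_or_app; left; exact Hh).
  assert (tie_side b p0 h <-> tie_side b (inU X u0) h).
  { destruct b; apply Hu0F, in_or_app; [right; apply in_map|left]; exact Hh. }
  tauto.
Qed.

Lemma interval_majority L p0 m : consistent p0 ->
  (interval X (majority L p0 false) (majority L p0 true) m <->
   roller X m /\ forall h, length L < 2 * votes L h -> m h).
Proof.
  intros [Hstar _]. unfold interval, majority, tie_side. split.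
  - intros [Rm Hm]; split; [exact Rm|]. intros h Hh; apply Hm; left; exact Hh.
  - intros [Rm Hm]; split; [exact Rm|].
    intros h [?|[_ Ph]] [?|[_ Phs]]; auto. apply Hstar in Phs; contradiction.
Qed.

End Majority.

Section Group.

Variables (X : CubeComplex) (A : GroupAction X).
Local Notation "a * b" := (gmul X A a b).
Local Notation "1" := (gone X A).

Lemma gmul_inv_r a : a * ginv A a = 1.
Proof.
  rewrite <- (gmul_one_l X A (a * ginv A a)), <- (gmul_inv_l X A (ginv A a)) at 1.
  rewrite <- gmul_assoc, (gmul_assoc X A (ginv A a) a), gmul_inv_l, gmul_one_l.
  apply gmul_inv_l.
Qed.

Lemma gmul_one_r a : a * 1 = a.
Proof. rewrite <- (gmul_inv_l X A a), gmul_assoc, gmul_inv_r, gmul_one_l. reflexivity. Qed.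

Lemma ginv_one : ginv A 1 = 1.
Proof. rewrite <- (gmul_one_r (ginv A 1)). apply gmul_inv_l. Qed.

Lemma ginv_mul a b : ginv A (a * b) = ginv A b * ginv A a.
Proof.
  rewrite <- (gmul_one_l X A (ginv A b * ginv A a)), <- (gmul_inv_l X A (a * b)).
  rewrite <- gmul_assoc, <- (gmul_assoc X A a b), (gmul_assoc X A b), gmul_inv_r,
    gmul_one_l, gmul_inv_r, gmul_one_r.
  reflexivity.
Qed.

End Group.

Section Action.

Variables (X : CubeComplex) (A : GroupAction X).

Lemma gact_mul g g' xi : gact A g (gact A g' xi) = gact A (gmul X A g g') xi.
Proof.
  unfold gact. apply functional_extensionality; intro h.
  rewrite ginv_mul, actH_mul. reflexivity.
Qed.

Lemma gact_one xi : gact A (gone X A) xi = xi.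
Proof.
  unfold gact. apply functional_extensionality; intro h.
  rewrite ginv_one, actH_one. reflexivity.
Qed.

Lemma gact_inj g : Injective (gact A g).
Proof.
  intros xi eta E. apply functional_extensionality; intro h.
  pose proof (f_equal (fun p => p (actH A g h)) E) as Eh. unfold gact in Eh.
  rewrite <- actH_mul, gmul_inv_l, actH_one in Eh. exact Eh.
Qed.

Lemma gact_roller g xi : roller X xi -> roller X (gact A g xi).
Proof.
  intros Rxi F. destruct (Rxi (map (actH A (ginv A g)) F)) as [v Hv].
  exists (actV X A g v). intros h Hh. unfold gact.
  rewrite (Hv _ (in_map _ _ _ Hh)), <- (act_inU X A g v).
  rewrite <- actH_mul, gmul_inv_r, actH_one. reflexivity.
Qed.

Definition orbit_enum (xi : hsset X) (O : list (hsset X)) : Prop :=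
  NoDup O /\ forall eta, In eta O <-> exists g, eta = gact A g xi.

Lemma orbit_enum_of_cover xi l : (forall g, In (gact A g xi) l) ->
  exists O, orbit_enum xi O.
Proof.
  intros Hl.
  pose (in_orbit eta := if excluded_middle_informative (exists g, eta = gact A g xi)
                        then true else false).
  pose (eq_dec (p q : hsset X) := excluded_middle_informative (p = q)).
  exists (nodup eq_dec (filter in_orbit l)). split; [apply NoDup_nodup|].
  intros eta. rewrite nodup_In, filter_In. unfold in_orbit.
  destruct (excluded_middle_informative _) as [Horb|Horb]; [|intuition discriminate].
  destruct Horb as [g ->]. intuition eauto.
Qed.

Lemma votes_gact g L h :
  votes X (map (gact A g) L) h = votes X L (actH A (ginv A g) h).
Proof. induction L; simpl; auto. Qed.

Lemma votes_orbit_invariant xi O g h : orbit_enum xi O ->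
  votes X O (actH A (ginv A g) h) = votes X O h.
Proof.
  intros [HO Horb]. rewrite <- votes_gact. apply votes_perm.
  apply Permutation_map_same_l; [apply Injective_map_NoDup; [apply gact_inj | exact HO]|].
  intros eta Heta. apply in_map_iff in Heta as [zeta [<- Hzeta]].
  apply Horb in Hzeta as [g' ->]. apply Horb. exists (gmul X A g g'). apply gact_mul.
Qed.

Lemma orbit_enum_roller xi O : roller X xi -> orbit_enum xi O ->
  forall p, In p O -> roller X p.
Proof. intros Rxi [_ Horb] p Hp. apply Horb in Hp as [g ->]. apply gact_roller, Rxi. Qed.

Lemma orbit_enum_base xi O : orbit_enum xi O -> In xi O.
Proof. intros [_ Horb]. apply Horb. exists (gone X A). symmetry; apply gact_one. Qed.

Lemma finite_orbit_invariant_interval xi O : roller X xi -> orbit_enum xi O ->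
  exists v w : hsset X, roller X v /\ roller X w /\
    forall m, interval X v w m <->
      exists (g : grp A) (m' : hsset X), interval X v w m' /\ m = gact A g m'.
Proof.
  intros Rxi HO.
  pose proof (orbit_enum_roller xi O Rxi HO) as RO.
  pose proof (roller_consistent X xi Rxi) as Cxi.
  exists (majority X O xi false), (majority X O xi true).
  split; [apply majority_roller, orbit_enum_base, HO; exact RO|].
  split; [apply majority_roller, orbit_enum_base, HO; exact RO|].
  intros m. rewrite (interval_majority X O xi m Cxi). split.
  - intros Hm. exists (gone X A), m. rewrite interval_majority, gact_one by exact Cxi. auto.
  - intros [g [m' [Hm' ->]]]. rewrite interval_majority in Hm' by exact Cxi.
    destruct Hm' as [Rm' Hm']. split; [apply gact_roller, Rm'|].
    intros h Hh. apply Hm'. rewrite (votes_orbit_invariant xi O g h HO). exact Hh.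
Qed.

(* With an odd number of votes there are no ties, so the majority vote is
   determined by the Γ-invariant counts alone. *)
Lemma odd_orbit_fixed_point xi O : roller X xi -> orbit_enum xi O ->
  Nat.odd (length O) = true ->
  exists zeta, roller X zeta /\ forall g, gact A g zeta = zeta.
Proof.
  intros Rxi HO Hodd.
  assert (Hnotie : forall c, 2 * c <> length O)
    by (intros c E; rewrite <- E, Nat.odd_mul in Hodd; discriminate).
  exists (majority X O xi false).
  split; [apply majority_roller; [exact (orbit_enum_roller xi O Rxi HO) | exact (orbit_enum_base xi O HO)]|].
  intros g. apply functional_extensionality; intro h. apply propositional_extensionality.
  unfold gact, majority. rewrite (votes_orbit_invariant xi O g h HO).
  split; intros [Hlt|[Heq _]]; auto; destruct (Hnotie _ Heq).
Qed.

End Action.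

Theorem proposition9p1 (X : CubeComplex) (A : GroupAction X) :
  (* Roller elementary: some Γ-orbit in X̄ is finite *)
  (exists xi : hsset X, roller X xi /\
     exists l : list (hsset X), forall g : grp A, In (gact A g xi) l) ->
  (* there are v, w ∈ X̄ with Γ · I(v,w) = I(v,w) *)
  (exists v w : hsset X, roller X v /\ roller X w /\
     forall m : hsset X,
       interval X v w m <->
       exists (g : grp A) (m' : hsset X), interval X v w m' /\ m = gact A g m')
  /\
  (* if moreover some Γ-orbit in X̄ has odd cardinality, Γ fixes a point of X̄ *)
  ((exists (xi : hsset X) (l : list (hsset X)), roller X xi /\ NoDup l /\
      (forall eta, In eta l <-> exists g : grp A, eta = gact A g xi) /\
      Nat.odd (length l) = true) ->
   exists xi : hsset X, roller X xi /\ forall g : grp A, gact A g xi = xi).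
Proof.
  intros [xi [Rxi [l Hl]]]. split.
  - destruct (orbit_enum_of_cover X A xi l Hl) as [O HO].
    exact (finite_orbit_invariant_interval X A xi O Rxi HO).
  - intros [xi' [l' [Rxi' [Hnodup [Horb Hodd]]]]].
    exact (odd_orbit_fixed_point X A xi' l' Rxi' (conj Hnodup Horb) Hodd).
Qed.
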